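(* Let $\Gamma\in\mathcal S$ have vertices $v_1,\dots,v_n$ and let $\varphi$ be an embedding into $\mathbb Z^n$ with no index of type (10). Then $\varphi$ has no index of type (4) if and only if $\sum_{i=1}^n d(v_i)=-3n-1$.
   Context: A plumbing tree is a finite tree $\Gamma$ each of whose vertices $v$ carries an integer decoration $d(v)$. $\Gamma$ is minimal if no vertex has decoration $-1$. For $n\ge 1$ let $(\mathbb Z^n,Q_n)$ be the lattice with basis $E_1,\dots,E_n$ and $Q_n(E_i,E_j)=-\delta_{ij}$, and let $K=\sum_{i=1}^n E_i$. A plumbing tree $\Gamma$ on $n$ vertices is a symplectic plumbing tree if there is a map $\varphi$ (an embedding) from its vertex set to $\mathbb Z^n$ such that: for distinct vertices $v_1,v_2$, $Q_n(\varphi(v_1),\varphi(v_2))$ is $1$ if they are adjacent and $0$ otherwise; $Q_n(\varphi(v),\varphi(v))=d(v)$ for every $v$; and $Q_n(\varphi(v),K)+Q_n(\varphi(v),\varphi(v))=-2$ for every $v$. $\mathcal S$ is the set of minimal, connected symplectic plumbing trees. Index types: write $\varphi(v)=\sum_i a_{v,i}E_i$; for an index $i$ consider the multiset of nonzero coefficients $a_{v,i}$ as $v$ ranges over all vertices. Index $i$ is of type (1) if this multiset is $\{1\}$, (2) if $\{-1\}$, (3) if $\{-2\}$, (4) if $\{1,-1\}$, (5) if $\{1,-2\}$, (6) if $\{-1,-1\}$, (7) if $\{1,-1,-1\}$, (9) if $\{1,-1,-1,-1\}$, and (10) if it is empty. *)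

From mathcomp Require Import all_boot all_order all_algebra.
Set Implicit Arguments. Unset Strict Implicit. Unset Printing Implicit Defensive.
Import Order.TTheory GRing.Theory Num.Theory.
Local Open Scope ring_scope.

(* Plumbing tree on n vertices: vertex set 'I_n, adjacency relation e, decoration d. *)

Definition simple_graph n (e : rel 'I_n) : Prop :=
  (forall v w, e v w = e w v) /\ (forall v, ~~ e v v).

Definition graph_connected n (e : rel 'I_n) : Prop :=
  forall v w, connect e v w.

Definition graph_acyclic n (e : rel 'I_n) : Prop :=
  ~ exists (x : 'I_n) (p : seq 'I_n),
      [/\ path e x p, uniq (x :: p), (2 <= size p)%N & e (last x p) x].

Definition is_tree n (e : rel 'I_n) : Prop :=
  [/\ simple_graph e, graph_connected e & graph_acyclic e].

Definition minimal n (d : 'I_n -> int) : Prop := forall v, d v != -1.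

(* lattice (Z^n, Q_n), Q_n(E_i,E_j) = - delta_ij *)
Definition Qn n (x y : 'I_n -> int) : int := - \sum_(i < n) x i * y i.
Definition Kvec n : 'I_n -> int := fun _ => 1.

(* phi v i = a_{v,i}, the i-th coefficient of phi(v) *)
Definition is_embedding n (e : rel 'I_n) (d : 'I_n -> int)
    (phi : 'I_n -> 'I_n -> int) : Prop :=
  [/\ (forall v w, v != w -> Qn (phi v) (phi w) = (if e v w then 1 else 0)),
      (forall v, Qn (phi v) (phi v) = d v) &
      (forall v, Qn (phi v) (@Kvec n) + Qn (phi v) (phi v) = -2)].

Definition symplectic n (e : rel 'I_n) (d : 'I_n -> int) : Prop :=
  exists phi, is_embedding e d phi.

Definition in_S n (e : rel 'I_n) (d : 'I_n -> int) : Prop :=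
  [/\ is_tree e, minimal d & symplectic e d].

(* multiset (as a sequence, up to permutation) of nonzero coefficients at index i *)
Definition index_coeffs n (phi : 'I_n -> 'I_n -> int) (i : 'I_n) : seq int :=
  [seq phi v i | v <- [seq v <- enum 'I_n | phi v i != 0]].

Definition index_type10 n (phi : 'I_n -> 'I_n -> int) (i : 'I_n) : bool :=
  index_coeffs phi i == [::].

Definition index_type4 n (phi : 'I_n -> 'I_n -> int) (i : 'I_n) : bool :=
  perm_eq (index_coeffs phi i) [:: 1; -1].

From mathcomp Require Import all_boot all_order all_algebra.
From mathcomp Require Import zify ring lra.
Import Order.TTheory GRing.Theory Num.Theory.
Local Open Scope ring_scope.
Set Implicit Arguments. Unset Strict Implicit. Unset Printing Implicit Defensive.

(* Let w_i be the sum of the i-th coordinates of the phi(v).  The embedding conditions give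
   sum_i a_{v,i} (a_{v,i} + 1) = 2 for every vertex, sum_i w_i = sum_v d(v) + 2n and
   sum_i w_i (w_i + 1) = 2n - sum_v deg(v) <= 2, the bound because the graph is connected.
   As sum_i (w_i + 1)(w_i + 2) = sum_i w_i (w_i + 1) + 2 sum_i w_i + 2n, the identity
   sum_v d(v) = -3n - 1 makes this sum of nonnegative terms at most 0, so no w_i vanishes and
   there is no index of type (4).  Conversely, every column holds at most one 1 and at most
   one -2, so a column with sum 0 has type (4) or (10); hence w_i <> 0 and w_i is -2, -1 or 1.
   A column sum 1 would isolate a vertex, and column sums all equal to -1 would make every
   degree 2 and create a cycle; so exactly one w_i is -2, the others are -1, and
   sum_i w_i = -n - 1. *)

Lemma int_mulrS_ge0 (x : int) : 0 <= x * (x + 1).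
Proof. nia. Qed.

Lemma int_mulrS_le2 (x : int) : x * (x + 1) <= 2 -> -2 <= x <= 1.
Proof. by move=> h; apply/andP; split; nia. Qed.

Section NonnegSums.
Variables (R : numDomainType) (I : finType) (F : I -> R).

Lemma ler_term_sum (P : pred I) i :
  P i -> (forall j, P j -> 0 <= F j) -> F i <= \sum_(j | P j) F j.
Proof. by move=> Pi F_ge0; rewrite (bigD1 i) //= lerDl sumr_ge0 // => j /andP[/F_ge0]. Qed.

Lemma ler_termD_sum i j :
  i != j -> (forall k, 0 <= F k) -> F i + F j <= \sum_k F k.
Proof.
move=> ij F_ge0; rewrite (bigD1 i) //= (bigD1 j) 1?eq_sym //=.
by rewrite addrA lerDl sumr_ge0.
Qed.

End NonnegSums.

Section ThreeValued.
Variable L : seq int.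
Hypothesis L_vals : all (mem [:: 1; -1; -2]) L.

Lemma count_three_valued (p : pred int) : count p L =
  (p 1%R * count_mem 1%R L + p (-1)%R * count_mem (-1)%R L
   + p (-2)%R * count_mem (-2)%R L)%N.
Proof.
elim: L L_vals => [|x s IH] /=; first by rewrite !muln0.
case/andP; rewrite !inE => /or3P[] /eqP -> {}/IH ->; rewrite /= ?eqxx /=; ring.
Qed.

Lemma sum_three_valued : \sum_(x <- L) x =
  (count_mem 1%R L)%:Z - (count_mem (-1)%R L)%:Z - 2 * (count_mem (-2)%R L)%:Z.
Proof.
elim: L L_vals => [|x s IH] /=; first by rewrite big_nil.
rewrite big_cons; case/andP; rewrite !inE => /or3P[] /eqP -> {}/IH ->; rewrite /= ?eqxx /=; lia.
Qed.

Hypotheses (count1_le1 : (count_mem 1%R L <= 1)%N)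
           (countN2_le1 : (count_mem (-2)%R L <= 1)%N).

Lemma three_valued_sum0 : \sum_(x <- L) x = 0 -> L = [::] \/ perm_eq L [:: 1; -1].
Proof.
rewrite sum_three_valued.
have count_L := count_three_valued; have size_L := count_L predT.
rewrite count_predT /= in size_L; move: count_L size_L count1_le1 countN2_le1.
move: (count_mem 1%R L) (count_mem (-1)%R L) (count_mem (-2)%R L).
move=> a b c count_L size_L a_le1 c_le1 sum0.
have [a0 | a1] : a = 0%N \/ a = 1%N by lia.
  by left; apply/eqP; rewrite -size_eq0 size_L; lia.
have [b1 c0] : b = 1%N /\ c = 0%N by lia.
by right; apply/permP => p; rewrite count_L a1 b1 c0 /= !muln1 muln0 !addn0.
Qed.

Lemma three_valued_sum1 : \sum_(x <- L) x = 1 -> 1 \in L.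
Proof. by rewrite sum_three_valued -has_pred1 has_count; lia. Qed.

End ThreeValued.

Section IntVectors.
Variables (I : finType) (w : I -> int).

Lemma sum_mulrS_shift : \sum_i (w i + 1) * (w i + 2) =
  \sum_i w i * (w i + 1) + 2 * \sum_i w i + 2 * #|I|%:Z.
Proof.
rewrite mulr_sumr -(natz #|I|) mulr_natr -sumr_const -!big_split /=.
by apply: eq_bigr => i _; ring.
Qed.

Lemma sum_N2N1 : (forall i, w i = -2 \/ w i = -1) -> (exists i, w i = -2) ->
  \sum_i w i * (w i + 1) <= 2 -> \sum_i w i = - #|I|%:Z - 1.
Proof.
move=> w_vals [i0 w_i0] le_T.
have ge_T := ler_term_sum (P := predT) (isT : predT i0) (fun i _ => int_mulrS_ge0 (w i)).
have shift0 : \sum_i (w i + 1) * (w i + 2) = 0.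
  by rewrite big1 // => i _; case: (w_vals i) => ->.
by move: shift0 ge_T; rewrite sum_mulrS_shift w_i0; lra.
Qed.

Lemma sum_eqN1_neq0 : \sum_i w i * (w i + 1) <= 2 ->
  \sum_i w i = - #|I|%:Z - 1 -> forall i, w i != 0.
Proof.
move=> le_T sum_w i; apply/eqP => w0.
have shift_ge0 j : 0 <= (w j + 1) * (w j + 2).
  by have := int_mulrS_ge0 (w j + 1); rewrite -addrA.
have := ler_term_sum (P := predT) (isT : predT i) (fun j _ => shift_ge0 j).
by rewrite sum_mulrS_shift sum_w w0; lra.
Qed.

End IntVectors.

Definition adj n (e : rel 'I_n) (v w : 'I_n) : int := if e v w then 1 else 0.

Definition degree n (e : rel 'I_n) (v : 'I_n) : int := \sum_w adj e v w.

Section Graph.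
Variables (n : nat) (e : rel 'I_n).
Hypothesis e_simple : simple_graph e.

Lemma adj_ge0 v w : 0 <= adj e v w.
Proof. by rewrite /adj; case: (e v w). Qed.

Lemma adj_le_degree v w : adj e v w <= degree e v.
Proof. exact: ler_term_sum (fun w _ => adj_ge0 v w). Qed.

Lemma degree_le1 v u : (forall y, e v y -> y = u) -> degree e v <= 1.
Proof.
move=> nbr_u; rewrite /degree (bigD1 u) //= big1 ?addr0 /adj ?lexx.
  by case: (e v u).
by move=> w /negbTE wu; case: ifP => // /nbr_u /eqP; rewrite wu.
Qed.

Definition inner_degree_sum (A : {set 'I_n}) : int :=
  \sum_(v in A) \sum_(w in A) adj e v w.

Lemma inner_degree_sumU1 (A : {set 'I_n}) a b : a \in A -> b \notin A -> e a b ->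
  inner_degree_sum A + 2 <= inner_degree_sum (b |: A).
Proof.
case: e_simple => e_sym _ aA bA eab; rewrite /inner_degree_sum big_setU1 //=.
under [X in _ <= _ + X]eq_bigr => v _ do rewrite big_setU1 //=.
rewrite big_setU1 //= big_split /=.
have ab1 : 1 <= \sum_(w in A) adj e b w.
  by have := ler_term_sum aA (fun w _ => adj_ge0 b w); rewrite /adj e_sym eab.
have ba1 : 1 <= \sum_(v in A) adj e v b.
  by have := ler_term_sum aA (fun v _ => adj_ge0 v b); rewrite /adj eab.
have := adj_ge0 b b; lra.
Qed.

Lemma connected_exit_edge (A : {set 'I_n}) a b : graph_connected e ->
  a \in A -> b \notin A -> exists xy : 'I_n * 'I_n, [&& xy.1 \in A, xy.2 \notin A & e xy.1 xy.2].
Proof.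
case: e_simple => e_sym _ conn aA bA.
case: (pickP [pred xy : 'I_n * 'I_n | [&& xy.1 \in A, xy.2 \notin A & e xy.1 xy.2]]).
  by move=> xy exit_xy; exists xy.
move=> no_exit; have A_closed : closed e A.
  move=> x y exy; case xA: (x \in A); case yA: (y \in A) => //.
    by have := no_exit (x, y); rewrite /= xA yA exy.
  by have := no_exit (y, x); rewrite /= xA yA e_sym exy.
by move: bA; rewrite -(closed_connect A_closed (conn a b)) aA.
Qed.

Lemma connected_degree_sum : (0 < n)%N -> graph_connected e ->
  2 * (n%:Z - 1) <= \sum_v degree e v.
Proof.
move=> n_gt0 conn.
have grow k : (k < n)%N -> exists A : {set 'I_n}, #|A| = k.+1 /\ 2 * k%:Z <= inner_degree_sum A.
  elim: k => [|k IH] k_lt.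
    exists [set Ordinal n_gt0]; rewrite cards1 /inner_degree_sum !big_set1.
    by case: e_simple => _ irr; rewrite /adj (negbTE (irr _)).
  have [A [cardA le_kA]] := IH (ltnW k_lt).
  have [a aA] : exists a, a \in A by apply/set0Pn; rewrite -card_gt0 cardA.
  have [b bA] : exists b, b \notin A.
    apply/existsP; rewrite -negb_forall; apply: contraTN k_lt => /forallP allA.
    have : (#|[set: 'I_n]| <= #|A|)%N by apply/subset_leq_card/subsetP => x _; exact: allA.
    by rewrite cardsT card_ord cardA; lia.
  have [[x y] /and3P[/= xA yA exy]] := connected_exit_edge conn aA bA.
  exists (y |: A); split; first by rewrite cardsU1 yA cardA.
  by have := inner_degree_sumU1 xA yA exy; lra.
have [A [cardA le_A]] := grow n.-1 ltac:(by rewrite ltn_predL).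
have A_full : A = [set: 'I_n].
  by apply/eqP; rewrite eqEcard subsetT cardsT card_ord cardA; lia.
have -> : \sum_v degree e v = inner_degree_sum A.
  rewrite /inner_degree_sum A_full; apply: eq_big => [v | v _]; first by rewrite in_setT.
  by apply: eq_bigl => w; rewrite in_setT.
by apply: le_trans le_A; rewrite ler_pM2l //; lia.
Qed.

Lemma acyclic_degree_lt2 : (0 < n)%N -> graph_acyclic e -> exists v, degree e v < 2.
Proof.
move=> n_gt0 acyc; apply/existsP; apply: contraT; rewrite negb_exists => /forallP deg_ge2.
have other_nbr v u : exists2 y, e v y & y != u.
  apply/exists_inP; apply: contraT; rewrite negb_exists_in => /forall_inP nbr_u.
  have := degree_le1 (fun y (eyv : e v y) => eqP (negbNE (nbr_u y eyv))).
  by have := deg_ge2 v; rewrite -leNgt /=; lra.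
case: e_simple => e_sym irr.
have long_path k : exists x p, [/\ path e x p, uniq (x :: p) & size p = k].
  elim: k => [|k [x [p [path_xp uniq_xp size_p]]]]; first by exists (Ordinal n_gt0), [::].
  have [y exy y_head] := other_nbr x (head x p).
  case yxp: (y \in x :: p); last first.
    exists y, (x :: p); split; last by rewrite /= size_p.
      by rewrite /= e_sym exy.
    by rewrite cons_uniq yxp.
  have yx : y != x by apply: contraTneq exy => ->; rewrite (negbTE (irr x)).
  move: yxp; rewrite inE (negbTE yx) /= => yp.
  have jp : (index y p < size p)%N by rewrite index_mem.
  have j_gt0 : index y p != 0%N.
    by apply: contraNneq y_head => j0; rewrite -nth0 -j0 nth_index.
  exfalso; apply: acyc; exists x, (take (index y p).+1 p); split.
  - exact: take_path.
  - exact: (take_uniq (index y p).+2 uniq_xp).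
  - by rewrite size_takel //; lia.
  - by rewrite (take_nth x jp) last_rcons nth_index // e_sym.
have [x [p [_ uniq_xp size_p]]] := long_path n.
by have := max_card (mem (x :: p)); rewrite (card_uniqP uniq_xp) card_ord /= size_p ltnn.
Qed.

End Graph.

Definition colsum n (phi : 'I_n -> 'I_n -> int) (i : 'I_n) : int := \sum_v phi v i.

Section Embedding.
Variables (n : nat) (e : rel 'I_n) (d : 'I_n -> int) (phi : 'I_n -> 'I_n -> int).
Hypothesis phi_emb : is_embedding e d phi.

Lemma embedding_dot v w :
  \sum_i phi v i * phi w i = if v == w then - d v else - adj e v w.
Proof.
case: phi_emb => Q_vw Q_vv _; rewrite -[LHS]opprK -/(Qn (phi v) (phi w)).
by case: eqP => [<- | /eqP vw]; rewrite ?Q_vv ?Q_vw.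
Qed.

Lemma embedding_row_sum v : \sum_i phi v i = d v + 2.
Proof.
case: phi_emb => _ Q_vv Q_vK; have := Q_vK v; rewrite Q_vv /Qn /Kvec.
under eq_bigr do rewrite mulr1.
lra.
Qed.

Lemma embedding_row_norm v : \sum_i phi v i * (phi v i + 1) = 2.
Proof.
under eq_bigr do rewrite mulrDr mulr1.
by rewrite big_split /= embedding_dot eqxx embedding_row_sum; lra.
Qed.

Lemma embedding_coef_bound v i : -2 <= phi v i <= 1.
Proof.
apply: int_mulrS_le2; rewrite -(embedding_row_norm v).
exact: ler_term_sum (fun j _ => int_mulrS_ge0 (phi v j)).
Qed.

(* For distinct rows, [sum_j (a_vj + a_wj) (a_vj + a_wj + 1) = 4 - 2 adj e v w <= 4], while a
   common coefficient [c] in [{1, -2}] would contribute [2c (2c + 1) >= 6]. *)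
Lemma embedding_coef_unique v w i :
  phi v i \in [:: 1; -2] -> phi w i = phi v i -> v = w.
Proof.
move=> c_vi c_wi; apply/eqP; apply: contraT => vw.
have sum_pair : \sum_j (phi v j + phi w j) * (phi v j + phi w j + 1)
    = 4 - 2 * adj e v w.
  transitivity (\sum_j phi v j * (phi v j + 1) + \sum_j phi w j * (phi w j + 1)
                + 2 * \sum_j phi v j * phi w j).
    by rewrite mulr_sumr -!big_split /=; apply: eq_bigr => j _; ring.
  by rewrite !embedding_row_norm embedding_dot (negbTE vw); ring.
have := ler_term_sum (P := predT) (isT : predT i)
  (fun j _ => int_mulrS_ge0 (phi v j + phi w j)).
rewrite sum_pair c_wi; have := adj_ge0 e v w.
by move: c_vi; rewrite !inE => /orP[] /eqP ->; lra.
Qed.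

Lemma index_coeffs_sum i : \sum_(x <- index_coeffs phi i) x = colsum phi i.
Proof.
rewrite /index_coeffs big_map big_filter big_enum_cond /=.
rewrite [RHS](bigID (fun v => phi v i != 0)) /= [X in _ + X]big1 ?addr0 //.
by move=> v /negbNE /eqP.
Qed.

Lemma index_coeffs_vals i : all (mem [:: 1; -1; -2]) (index_coeffs phi i).
Proof.
apply/allP => x /mapP[v]; rewrite mem_filter => /andP[nz _] ->.
by move: nz (embedding_coef_bound v i); rewrite !inE; lia.
Qed.

Lemma index_coeffs_count_le1 i c :
  c \in [:: 1; -2] -> (count_mem c (index_coeffs phi i) <= 1)%N.
Proof.
move=> c12; rewrite count_map count_filter -size_filter.
rewrite -[X in (X <= 1)%N](card_uniqP _) ?filter_uniq -?enumT ?enum_uniq //.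
apply/card_le1_eqP => v w; rewrite !mem_filter /= => /andP[/andP[/eqP vc _] _].
by move=> /andP[/andP[/eqP wc _] _]; apply: (embedding_coef_unique (i := i)); rewrite wc // vc.
Qed.

Lemma colsum_sum : \sum_i colsum phi i = \sum_v d v + 2 * n%:Z.
Proof.
rewrite /colsum exchange_big /=; under eq_bigr do rewrite embedding_row_sum.
by rewrite big_split /= sumr_const card_ord -(natz n) mulr_natr.
Qed.

Lemma index_type4_colsum i : index_type4 phi i -> colsum phi i = 0.
Proof.
by move=> t4; rewrite -index_coeffs_sum (perm_big _ t4) /= !big_cons big_nil addr0 subrr.
Qed.

Lemma colsum_neq0 i : ~~ index_type10 phi i -> ~~ index_type4 phi i -> colsum phi i != 0.
Proof.
move=> not10 not4; apply/eqP => w0.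
have := three_valued_sum0 (index_coeffs_vals i) (index_coeffs_count_le1 i (c := 1) isT)
  (index_coeffs_count_le1 i (c := -2) isT).
by rewrite index_coeffs_sum w0 => /(_ erefl) [/eqP | ]; apply/negP.
Qed.

Lemma colsum_eq1_coef i : colsum phi i = 1 -> exists u, phi u i = 1.
Proof.
move=> w1; have := three_valued_sum1 (index_coeffs_vals i) (index_coeffs_count_le1 i (c := 1) isT)
  (index_coeffs_count_le1 i (c := -2) isT).
by rewrite index_coeffs_sum w1 => /(_ erefl) /mapP[u _ ->]; exists u.
Qed.

Hypothesis e_simple : simple_graph e.

Lemma colsum_dot v : \sum_i colsum phi i * phi v i = - d v - degree e v.
Proof.
case: e_simple => e_sym irr.
under eq_bigr do rewrite mulr_suml.
rewrite exchange_big /=; under eq_bigr do rewrite embedding_dot.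
rewrite (bigD1 v) //= eqxx /degree [\sum_w adj e v w](bigD1 v) //=.
rewrite {2}/adj (negbTE (irr v)) add0r -sumrN; congr (_ + _).
by apply: eq_bigr => w wv; rewrite (negbTE wv) /adj e_sym.
Qed.

Lemma colsum_norm :
  \sum_i colsum phi i * (colsum phi i + 1) = 2 * n%:Z - \sum_v degree e v.
Proof.
under eq_bigr do rewrite mulrDr mulr1.
rewrite big_split /= colsum_sum.
have -> : \sum_i colsum phi i * colsum phi i = \sum_v (- d v - degree e v).
  rewrite -(eq_bigr _ (fun v _ => colsum_dot v)) exchange_big /=.
  by apply: eq_bigr => i _; rewrite {1}/colsum mulr_suml; apply: eq_bigr => v _; rewrite mulrC.
rewrite big_split /= !sumrN; ring.
Qed.

Lemma colsum_norm_le2 : (0 < n)%N -> graph_connected e ->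
  \sum_i colsum phi i * (colsum phi i + 1) <= 2.
Proof.
move=> n_gt0 conn; rewrite colsum_norm.
by have := connected_degree_sum e_simple n_gt0 conn; lra.
Qed.

(* By [colsum_norm_le2] a column sum 1 forces all other column sums to be -1, and then the row
   carrying the 1 in that column is an isolated vertex. *)
Lemma colsum_neq1 : (0 < n)%N -> graph_connected e -> minimal d ->
  (forall i, colsum phi i != 0) -> forall i, colsum phi i != 1.
Proof.
move=> n_gt0 conn d_min w_neq0 i0; apply/eqP => w1.
have others j : j != i0 -> colsum phi j = -1.
  move=> ji0; have := w_neq0 j.
  have := le_trans (ler_termD_sum ji0 (fun k => int_mulrS_ge0 (colsum phi k)))
    (colsum_norm_le2 n_gt0 conn).
  rewrite w1; nia.
have [u phi_u] := colsum_eq1_coef w1.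
have deg_u : degree e u = 0.
  have := colsum_dot u.
  have -> : \sum_i colsum phi i * phi u i = 2 * phi u i0 - \sum_i phi u i.
    rewrite (bigD1 i0) //= [\sum_i phi u i](bigD1 i0) //= w1.
    rewrite (eq_bigr (fun i => - phi u i)) => [|i /others ->]; last by rewrite mulN1r.
    by rewrite sumrN; ring.
  by rewrite embedding_row_sum phi_u; lra.
have [v vu | all_u] := pickP [pred v | v != u].
  have v_out : v \notin [set u] by rewrite in_set1.
  have [[x y] /and3P[/= /set1P -> _ euy]] := connected_exit_edge e_simple conn (set11 u) v_out.
  by have := adj_le_degree e u y; rewrite deg_u /adj euy.
have := embedding_dot u u; rewrite eqxx (bigD1 i0) //= phi_u big1 => [|i ii0].
  by rewrite addr0 => d_u; move: (d_min u); rewrite -[d u]opprK -d_u.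
by move: (all_u i) (all_u i0) ii0 => /= /negbFE/eqP -> /negbFE/eqP ->; rewrite eqxx.
Qed.

Lemma colsum_not_all_N1 : (0 < n)%N -> graph_acyclic e -> exists i, colsum phi i != -1.
Proof.
move=> n_gt0 acyc; apply/existsP; apply: contraT; rewrite negb_exists => /forallP all_N1.
have [v deg_v] := acyclic_degree_lt2 e_simple n_gt0 acyc.
have := colsum_dot v; rewrite (eq_bigr (fun i => - phi v i)) => [|i _]; last first.
  by rewrite (eqP (negbNE (all_N1 i))) mulN1r.
by rewrite sumrN embedding_row_sum; lra.
Qed.

End Embedding.

Unset Implicit Arguments.

Theorem mainTheorem13 (n : nat) (e : rel 'I_n) (d : 'I_n -> int)
    (phi : 'I_n -> 'I_n -> int) :
  (0 < n)%N ->
  in_S e d ->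
  is_embedding e d phi ->
  (forall i : 'I_n, ~~ index_type10 phi i) ->
  ((forall i : 'I_n, ~~ index_type4 phi i) <->
   \sum_(v < n) d v = - (3 * n%:Z) - 1).
Proof.
move=> n_gt0 [[e_simple conn acyc] d_min _] phi_emb no10.
have le_T := colsum_norm_le2 phi_emb e_simple n_gt0 conn.
have -> : \sum_v d v = - (3 * n%:Z) - 1 <-> \sum_i colsum phi i = - #|'I_n|%:Z - 1.
  by rewrite (colsum_sum phi_emb) card_ord; split=> ?; lra.
split=> [no4 | sum_w i].
- have w_neq0 i : colsum phi i != 0 := colsum_neq0 phi_emb (no10 i) (no4 i).
  have w_neq1 := colsum_neq1 phi_emb e_simple n_gt0 conn d_min w_neq0.
  have w_vals i : colsum phi i = -2 \/ colsum phi i = -1.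
    have := int_mulrS_le2 (le_trans (ler_term_sum (P := predT) (isT : predT i)
      (fun j _ => int_mulrS_ge0 (colsum phi j))) le_T).
    by have := w_neq0 i; have := w_neq1 i; lia.
  apply: sum_N2N1 le_T => //.
  have [i w_i] := colsum_not_all_N1 phi_emb e_simple n_gt0 acyc.
  by exists i; case: (w_vals i) w_i => ->.
- apply/negP => /index_type4_colsum /eqP.
  by apply/negP; exact: sum_eqN1_neq0 le_T sum_w i.
Qed.
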